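(* Let $G$ be a non-complete double-critical $k$-chromatic graph. For every edge $xy\in E(G)$, every $(k-2)$-colouring of $G-x-y$ with colour set $[k-2]=\{1,\dots,k-2\}$, and every non-empty sequence $j_1,j_2,\dots,j_i$ of $i$ pairwise distinct colours from $[k-2]$, there is a path of order $i+2$ starting at $x$ and ending at $y$ whose $t$-th vertex after $x$ has colour $j_t$ for all $t\in[i]$. In particular, $xy$ is contained in at least $(k-2)!/(k-2-i)!$ cycles of length $i+2$.
   Context: All graphs are finite and simple. A graph $G$ is (vertex-)critical if $\chi(G-v)<\chi(G)$ for every vertex $v\in V(G)$. A critical graph $G$ is double-critical if $\chi(G-x-y)\le\chi(G)-2$ for every edge $xy\in E(G)$. The order of a path is its number of vertices; the length of a cycle is its number of edges. *)

(* A simple graph is a symmetric irreflexive relation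
   e : rel T on a finType T (hypotheses stated in the theorem). *)
From mathcomp Require Import all_boot.
Set Implicit Arguments. Unset Strict Implicit. Unset Printing Implicit Defensive.

Section Graphs.
Variables (T : finType) (e : rel T).

Definition colourable (S : {set T}) (n : nat) : bool :=
  [exists f : {ffun T -> 'I_n},
     [forall u in S, forall v in S, e u v ==> (f u != f v)]].

(* Chromatic number of the induced subgraph G[S]: the least n <= #|T| such
   that G[S] is n-colourable (for an irreflexive e, #|T| colours always
   suffice, so this is the chromatic number). *)
Definition chi (S : {set T}) : nat :=
  \big[minn/#|T|]_(n < #|T|.+1 | colourable S n) n.

Definition chiG : nat := chi [set: T].

Definition critical : Prop :=
  forall v : T, chi ([set: T] :\ v) < chiG.

Definition double_critical : Prop :=
  critical /\ forall x y : T, e x y -> chi ([set: T] :\ x :\ y) <= chiG - 2.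

Definition complete : Prop := forall u v : T, u != v -> e u v.

Definition proper_colouring (n : nat) (S : {set T}) (c : T -> 'I_n) : Prop :=
  forall u v, u \in S -> v \in S -> e u v -> c u != c v.

(* C (a set of 2-element vertex sets = edges) is the edge set of a cycle of
   G of length L (L >= 3). *)
Definition is_cycle_of_length (L : nat) (C : {set {set T}}) : bool :=
  (2 < L) &&
  [exists vs : L.-tuple T,
     [&& uniq vs, cycle e vs &
         C == [set [set p.1; p.2] | p in zip vs (rot 1 vs)]]].

End Graphs.

(* Suppose no x-y path with inner colours j_1, ..., j_i exists.  Call a vertex
   v of G - x - y reachable if some path x v_1 ... v_t = v of G - x - y has
   colours j_1, ..., j_t.  Recolour every reachable vertex of colour j_t with
   j_(t+1) (with a new colour k-1 when t = i), give x the colour j_1 and y the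
   colour k-1.  Every conflict this could create would extend a coloured path,
   or would close one into the forbidden x-y path, so G becomes
   (k-1)-colourable, contradicting chi(G) = k.  Distinct colour sequences give
   paths with distinct vertex sequences and hence distinct cycles through xy. *)
From mathcomp Require Import all_boot zify.
Set Implicit Arguments. Unset Strict Implicit. Unset Printing Implicit Defensive.

Section ChromaticNumber.
Variables (T : finType) (e : rel T).
Hypothesis e_irr : irreflexive e.

Lemma chi_le_card S : chi e S <= #|T|.
Proof.
rewrite /chi; elim/big_ind: _ => //; first by move=> a b Ha _; rewrite geq_min Ha.
by move=> i _; rewrite -ltnS.
Qed.

Lemma chi_le_colourable S m : colourable e S m -> chi e S <= m.
Proof.
move=> Sm; have [mT|Tm] := leqP m #|T|; last exact: leq_trans (chi_le_card S) (ltnW Tm).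
rewrite /chi; have : Ordinal (mT : m < #|T|.+1) \in index_enum 'I_#|T|.+1.
  by rewrite mem_index_enum.
elim: (index_enum _) => [|a r IHr] //; rewrite inE big_cons.
case/orP=> [/eqP <-|ar]; first by rewrite /= Sm geq_minl.
by case: ifP => _; rewrite ?geq_min IHr ?orbT.
Qed.

Lemma colourable_card S : colourable e S #|T|.
Proof.
apply/existsP; exists [ffun v => enum_rank v].
apply/forallP=> u; apply/implyP=> _; apply/forallP=> v; apply/implyP=> _.
apply/implyP=> uv; rewrite !ffunE; apply: contraL uv => /eqP/enum_rank_inj->.
by rewrite e_irr.
Qed.

Lemma colourable_chi S : colourable e S (chi e S).
Proof.
rewrite /chi; elim/big_ind: _ => //; first exact: colourable_card.
by move=> a b Ha Hb; rewrite /minn; case: ifP.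
Qed.

Lemma colourable_proper_colouring S m n : colourable e S m -> m <= n ->
  exists c : T -> 'I_n, proper_colouring e S c.
Proof.
move=> /existsP[f /forallP f_proper] mn; exists (fun v => widen_ord mn (f v)).
move=> u v uS vS uv.
have /implyP/(_ uS)/forallP/(_ v)/implyP/(_ vS)/implyP/(_ uv) := f_proper u.
by apply: contra => /eqP/(congr1 val) /= fuv; apply/eqP/val_inj.
Qed.

Lemma proper_colouring_colourable S n (c : T -> 'I_n) :
  proper_colouring e S c -> colourable e S n.
Proof.
move=> c_proper; apply/existsP; exists [ffun v => c v].
apply/forallP=> u; apply/implyP=> uS; apply/forallP=> v; apply/implyP=> vS.
by apply/implyP=> uv; rewrite !ffunE c_proper.
Qed.

End ChromaticNumber.

Section PathEdges.
Variable T : finType.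

Fixpoint path_edges (s : seq T) : {set {set T}} :=
  if s is a :: ((b :: _) as s') then [set a; b] |: path_edges s' else set0.

Lemma path_edges_cons2 a b s :
  path_edges [:: a, b & s] = [set a; b] |: path_edges (b :: s).
Proof. by []. Qed.

Lemma path_edges_mem s E z : E \in path_edges s -> z \in E -> z \in s.
Proof.
elim: s => [|a [|b s] IHs]; try by rewrite inE.
rewrite /= in_setU1.
case/orP=> [/eqP->|Es]; first by rewrite !inE => /orP[]->; rewrite ?orbT.
by move=> zE; rewrite inE (IHs Es zE) orbT.
Qed.

Lemma path_edges_inj x r r' : uniq (x :: r) -> uniq (x :: r') ->
  path_edges (x :: r) = path_edges (x :: r') -> r = r'.
Proof.
elim: r x r' => [|a q IHq] x [|a' q'] //=.
- by move=> _ _ /setP/(_ [set x; a']); rewrite !inE eqxx.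
- by move=> _ _ /setP/(_ [set x; a]); rewrite !inE eqxx.
rewrite !inE !negb_or => /andP[/andP[xa xq] uq] /andP[/andP[xa' xq'] uq'] E.
have fresh b s : x != b -> x \notin s -> [set x; a] \notin path_edges (b :: s).
  move=> xb xs; apply/negP=> /path_edges_mem/(_ (set21 x a)).
  by rewrite inE (negbTE xb) (negbTE xs).
have : [set x; a] \in [set x; a'] |: path_edges (a' :: q') by rewrite -E setU11.
rewrite in_setU1 (negbTE (fresh _ _ xa' xq')) orbF => /eqP xa_xa'.
have : a \in [set x; a'] by rewrite -xa_xa' set22.
rewrite !inE eq_sym (negbTE xa) /= => /eqP aa'; subst a'.
congr (_ :: _); apply: (IHq a) => //.
by rewrite -(setU1K (fresh _ _ xa xq)) -(setU1K (fresh _ _ xa' xq')) E.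
Qed.

Lemma zip_rcons_edges (a b : T) s :
  [set [set q.1; q.2] | q in zip (a :: s) (rcons s b)] =
  [set last a s; b] |: path_edges (a :: s).
Proof.
elim: s a => [|c s IHs] a.
  apply/setP=> E; rewrite !inE orbF; apply/imsetP/eqP => [[q]|->].
    by rewrite inE => /eqP -> ->.
  by exists (a, b); rewrite ?inE.
rewrite /= setUCA -IHs; apply/setP=> E; rewrite !inE; apply/imsetP/idP.
  case=> q; rewrite inE => /orP[/eqP->->|qs ->]; first by rewrite eqxx.
  by apply/orP; right; apply/imsetP; exists q.
case/orP=> [/eqP->|/imsetP[r rs ->]]; first by exists (a, c); rewrite // inE eqxx.
by exists r; rewrite // inE rs orbT.
Qed.

End PathEdges.

Section CyclesThroughEdge.
Variables (T : finType) (e : rel T) (x y : T).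

(* The edge set of the cycle formed by an x-y path with inner vertices p and
   the edge yx, written as in [is_cycle_of_length]. *)
Definition closed_path_edges (p : seq T) : {set {set T}} :=
  [set [set q.1; q.2] | q in zip (x :: rcons p y) (rot 1 (x :: rcons p y))].

Lemma closed_path_edgesE p :
  closed_path_edges p = [set y; x] |: path_edges (x :: rcons p y).
Proof. by rewrite /closed_path_edges rot1_cons zip_rcons_edges last_rcons. Qed.

Lemma closing_edge_notin_path p : 0 < size p -> uniq (x :: rcons p y) ->
  [set y; x] \notin path_edges (x :: rcons p y).
Proof.
case: p => [|a q] // _; rewrite rcons_cons path_edges_cons2 in_setU1 negb_or.
rewrite [uniq _]/= !inE !mem_rcons !inE !negb_or.
move=> /and3P[/and3P[xa xy xq] /andP[ay _] _].
apply/andP; split.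
  apply/negP=> /eqP yx_xa; have : y \in [set x; a] by rewrite -yx_xa set21.
  by rewrite !inE (eq_sym y x) (negbTE xy) (eq_sym y a) (negbTE ay).
apply/negP=> /path_edges_mem/(_ (set22 y x)).
by rewrite inE mem_rcons inE (negbTE xa) (negbTE xy) (negbTE xq).
Qed.

Lemma closed_path_edges_inj p1 p2 : 0 < size p1 -> 0 < size p2 ->
  uniq (x :: rcons p1 y) -> uniq (x :: rcons p2 y) ->
  closed_path_edges p1 = closed_path_edges p2 -> p1 = p2.
Proof.
move=> p1_gt0 p2_gt0 u1 u2; rewrite !closed_path_edgesE => E.
apply: (@rcons_injl _ y); apply: (path_edges_inj u1 u2).
rewrite -(setU1K (closing_edge_notin_path p1_gt0 u1)).
by rewrite -(setU1K (closing_edge_notin_path p2_gt0 u2)) E.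
Qed.

Lemma closed_path_is_cycle p : 0 < size p -> uniq (x :: rcons p y) ->
  path e x (rcons p y) -> e y x ->
  is_cycle_of_length e (size p + 2) (closed_path_edges p).
Proof.
move=> p_gt0 up pp yx; rewrite /is_cycle_of_length addn2 !ltnS p_gt0 /=.
have sp : size (x :: rcons p y) == (size p).+2 by rewrite /= size_rcons.
apply/existsP; exists (Tuple sp).
have -> : (Tuple sp : seq T) = x :: rcons p y by [].
by rewrite up /= rcons_path pp last_rcons yx /= eqxx.
Qed.

Lemma closing_edge_mem p : [set x; y] \in closed_path_edges p.
Proof. by rewrite closed_path_edgesE setUC setU11. Qed.

Lemma cycles_through_edge_lower_bound n (c : T -> 'I_n) i : 0 < i -> e y x ->
  (forall js : seq 'I_n, uniq js -> 0 < size js ->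
     exists p : seq T, [/\ size p = size js, uniq (x :: rcons p y),
                           path e x (rcons p y) & map c p = js]) ->
  n ^_ i <= #|[set C | is_cycle_of_length e (i + 2) C & [set x; y] \in C]|.
Proof.
move=> i_gt0 yx coloured_paths.
pose good (js : i.-tuple 'I_n) (p : i.-tuple T) :=
  [&& uniq (x :: rcons p y), path e x (rcons p y) & map c p == js].
pose cycle_of js :=
  oapp (fun p : i.-tuple T => closed_path_edges p) set0 [pick p | good js p].
pose A := [set js : i.-tuple 'I_n | all predT js & uniq js].
have pick_good js : js \in A -> exists2 p, [pick p | good js p] = Some p & good js p.
  rewrite inE => /andP[_ ujs]; have js_gt0 : 0 < size js by rewrite size_tuple.
  have [p [sp up pp cp]] := coloured_paths js ujs js_gt0.
  case: pickP => [q ?|no_good]; first by exists q.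
  have sp' : size p == i by rewrite sp size_tuple.
  have := no_good (Tuple sp'); rewrite /good.
  have -> : (Tuple sp' : seq T) = p by [].
  by rewrite up pp cp eqxx.
have -> : n ^_ i = #|A| by rewrite card_uniq_tuples card_ord.
rewrite -(card_in_imset (f := cycle_of)).
  apply/subset_leq_card/subsetP => _ /imsetP[js /pick_good[p pick_p good_p] ->].
  case/and3P: good_p => up pp _.
  rewrite inE /cycle_of pick_p /= closing_edge_mem andbT.
  by have := @closed_path_is_cycle p; rewrite size_tuple; apply.
move=> js1 js2 /pick_good[p1 pick1 /and3P[u1 _ /eqP c1]].
move=> /pick_good[p2 pick2 /and3P[u2 _ /eqP c2]].
rewrite /cycle_of pick1 pick2 /= => /closed_path_edges_inj.
rewrite !size_tuple => /(_ i_gt0 i_gt0 u1 u2) p12.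
by apply: val_inj; rewrite /= -c1 -c2 p12.
Qed.

End CyclesThroughEdge.

Section Recolouring.
Variables (T : finType) (e : rel T) (x y : T) (n : nat) (c : T -> 'I_n)
  (js : seq 'I_n) (j0 : 'I_n).
Hypotheses (e_sym : symmetric e) (e_irr : irreflexive e) (exy : e x y)
  (c_proper : proper_colouring e ([set: T] :\ x :\ y) c) (ujs : uniq js).

Let S := [set: T] :\ x :\ y.

Let in_S v : (v \in S) = (v != y) && (v != x).
Proof. by rewrite !inE andbT. Qed.

Let x_neq_y : x != y.
Proof. by apply: contraTneq exy => ->; rewrite e_irr. Qed.

Definition coloured_walk (t : nat) (v : T) : bool :=
  (t < size js) && (c v == nth j0 js t) &&
  [exists p : t.+1.-tuple T, [&& path e x p, last x p == v,
     all [in S] p & map c p == take t.+1 js]].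

Definition reachable (v : T) : bool :=
  (c v \in js) && coloured_walk (index (c v) js) v.

Lemma coloured_walk_colour t v :
  coloured_walk t v -> t < size js /\ c v = nth j0 js t.
Proof. by case/andP=> /andP[? /eqP ?]. Qed.

Lemma coloured_walk_reachable t v : coloured_walk t v -> reachable v.
Proof.
move=> walk_v; have [t_lt cv] := coloured_walk_colour walk_v.
by rewrite /reachable cv mem_nth // index_uniq.
Qed.

Lemma reachable_walk v : reachable v -> coloured_walk (index (c v) js) v.
Proof. by case/andP. Qed.

Lemma coloured_walk0 v : 0 < size js -> e x v -> v \in S ->
  c v = nth j0 js 0 -> coloured_walk 0 v.
Proof.
move=> js_gt0 xv vS cv; rewrite /coloured_walk js_gt0 cv eqxx /=.
apply/existsP; exists [tuple v]; rewrite /= xv eqxx vS cv /=.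
by case: (js) js_gt0 => //= a s; rewrite take0.
Qed.

Lemma coloured_walkS t u v : coloured_walk t u -> e u v -> v \in S ->
  t.+1 < size js -> c v = nth j0 js t.+1 -> coloured_walk t.+1 v.
Proof.
case/andP=> _ /existsP[p /and4P[pp /eqP lp pS /eqP cp]] uv vS t_lt cv.
rewrite /coloured_walk t_lt cv eqxx /=; apply/existsP; exists (rcons_tuple p v).
rewrite /= rcons_path pp lp uv last_rcons eqxx all_rcons vS pS /=.
by rewrite map_rcons cp cv -take_nth.
Qed.

Lemma coloured_walk_path t v : coloured_walk t v -> t.+1 = size js -> e v y ->
  exists p : seq T, [/\ size p = size js, uniq (x :: rcons p y),
                      path e x (rcons p y) & map c p = js].
Proof.
case/andP=> _ /existsP[p /and4P[pp /eqP lp /allP pS /eqP cp]] t_js vy.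
have {}cp : map c p = js by rewrite cp t_js take_size.
exists p; split; rewrite ?size_tuple ?rcons_path ?pp ?lp //.
have up : uniq p by apply: (map_uniq (f := c)); rewrite cp.
rewrite /= rcons_uniq up mem_rcons inE negb_or x_neq_y andbT /=.
by apply/andP; split; apply/negP => /pS; rewrite in_S eqxx // andbF.
Qed.

Hypothesis js_gt0 : 0 < size js.
Hypothesis no_closing_walk : forall v, coloured_walk (size js).-1 v -> ~~ e v y.

(* Colours are read as naturals, [n] being the new colour. *)
Definition next_colour (t : nat) : nat :=
  if t.+1 < size js then nth j0 js t.+1 : nat else n.

Definition recolour (v : T) : nat :=
  if v == x then nth j0 js 0 : nat else if v == y then n
  else if reachable v then next_colour (index (c v) js) else c v.

Lemma recolour_S v : v \in S ->
  recolour v = if reachable v then next_colour (index (c v) js) else c v.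
Proof. by rewrite in_S /recolour => /andP[/negbTE-> /negbTE->]. Qed.

Lemma recolour_le v : recolour v <= n.
Proof.
rewrite /recolour /next_colour; case: ifP => _; first exact: ltnW.
case: ifP => // _; case: ifP => _; last exact: ltnW.
by case: ifP => // _; apply: ltnW.
Qed.

Lemma recolour_reachable_edge u v : u \in S -> v \in S -> e u v ->
  reachable u -> recolour u != recolour v.
Proof.
move=> uS vS uv reach_u; rewrite (recolour_S uS) (recolour_S vS) reach_u.
have [a_lt cu] := coloured_walk_colour (reachable_walk reach_u).
set a := index (c u) js in a_lt cu *; rewrite /next_colour.
case reach_v: (reachable v); last first.
  case: ifP => [a1_lt|_]; last by rewrite eq_sym ltn_eqF.
  apply/negP => /eqP cv.
  have cvj : c v = nth j0 js a.+1 by apply: val_inj; rewrite /= cv.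
  have walk_v := coloured_walkS (reachable_walk reach_u) uv vS a1_lt cvj.
  by have := coloured_walk_reachable walk_v; rewrite reach_v.
have [b_lt cv] := coloured_walk_colour (reachable_walk reach_v).
set b := index (c v) js in b_lt cv *.
have ab : a != b by apply: contra_neq (c_proper uS vS uv) => ab; rewrite cu cv ab.
case: ifP => [a1_lt|a1_ge]; case: ifP => [b1_lt|b1_ge].
- by rewrite -[_ == _]/(nth j0 js a.+1 == nth j0 js b.+1) nth_uniq.
- by rewrite ltn_eqF.
- by rewrite eq_sym ltn_eqF.
- have a_last : a.+1 = size js by apply/eqP; rewrite eqn_leq a_lt leqNgt a1_ge.
  have b_last : b.+1 = size js by apply/eqP; rewrite eqn_leq b_lt leqNgt b1_ge.
  by move: ab; rewrite -eqSS a_last b_last eqxx.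
Qed.

Lemma recolour_x_edge v : v \in S -> e x v -> recolour x != recolour v.
Proof.
move=> vS xv; rewrite (recolour_S vS) /recolour eqxx.
case reach_v: (reachable v); rewrite /next_colour.
  case: ifP => [t1_lt|_]; last by rewrite ltn_eqF.
  by rewrite -[_ == _]/(nth j0 js 0 == nth j0 js _) nth_uniq.
apply/negP => /eqP cv; have cvj : c v = nth j0 js 0 by apply: val_inj; rewrite /= cv.
by have := coloured_walk_reachable (coloured_walk0 js_gt0 xv vS cvj); rewrite reach_v.
Qed.

Lemma recolour_y_edge v : v \in S -> e y v -> recolour y != recolour v.
Proof.
move=> vS yv; rewrite (recolour_S vS) /recolour (eq_sym y x) (negbTE x_neq_y) eqxx.
case reach_v: (reachable v); last by rewrite eq_sym ltn_eqF.
have [t_lt _] := coloured_walk_colour (reachable_walk reach_v).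
rewrite /next_colour; case: ifP => [_|t1_ge]; first by rewrite eq_sym ltn_eqF.
have t_last : index (c v) js = (size js).-1.
  by apply/eqP; rewrite -eqSS prednK // eqn_leq t_lt leqNgt t1_ge.
by have := reachable_walk reach_v; rewrite t_last => /no_closing_walk; rewrite e_sym yv.
Qed.

Lemma recolour_edge_S u v : u \in S -> e u v -> recolour u != recolour v.
Proof.
move=> uS uv; have vu : e v u by rewrite e_sym.
case: (eqVneq v x) => [vx|vx]; first by subst v; rewrite eq_sym; apply: recolour_x_edge.
case: (eqVneq v y) => [vy|vy]; first by subst v; rewrite eq_sym; apply: recolour_y_edge.
have vS : v \in S by rewrite in_S vx vy.
case reach_u: (reachable u); first exact: recolour_reachable_edge.
case reach_v: (reachable v); first by rewrite eq_sym; apply: recolour_reachable_edge.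
by rewrite (recolour_S uS) (recolour_S vS) reach_u reach_v c_proper.
Qed.

Lemma recolour_proper u v : e u v -> recolour u != recolour v.
Proof.
move=> uv; case: (boolP (u \in S)) => [uS|uNS]; first exact: recolour_edge_S.
case: (boolP (v \in S)) => [vS|vNS].
  by rewrite eq_sym; apply: recolour_edge_S; rewrite // e_sym.
have x_or_y w : w \notin S -> w = x \/ w = y.
  by rewrite in_S negb_and !negbK => /orP[]/eqP; [right|left].
have recolour_xy : recolour x != recolour y.
  by rewrite /recolour eqxx (eq_sym y x) (negbTE x_neq_y) eqxx ltn_eqF.
by case: (x_or_y _ uNS) (x_or_y _ vNS) uv => -> [] ->; rewrite ?e_irr // eq_sym.
Qed.

Lemma colourable_recolour : colourable e [set: T] n.+1.
Proof.
apply: (@proper_colouring_colourable _ _ _ _ (fun v => inord (recolour v))).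
move=> u v _ _ /recolour_proper; apply: contra => /eqP/(congr1 val).
by rewrite /= !inordK ?ltnS ?recolour_le // => ->.
Qed.

End Recolouring.

Lemma coloured_path_exists (T : finType) (e : rel T) (x y : T) n
    (c : T -> 'I_n) (js : seq 'I_n) :
  symmetric e -> irreflexive e -> e x y ->
  proper_colouring e ([set: T] :\ x :\ y) c -> uniq js -> 0 < size js ->
  ~~ colourable e [set: T] n.+1 ->
  exists p : seq T, [/\ size p = size js, uniq (x :: rcons p y),
                      path e x (rcons p y) & map c p = js].
Proof.
move=> e_sym e_irr exy c_proper ujs js_gt0 not_colourable.
have j0 : 'I_n by move: js_gt0; case: (js) => [|j] // _; exact: j.
case: (boolP [exists v, coloured_walk e x y c js j0 (size js).-1 v && e v y]).
  case/existsP=> v /andP[walk_v vy].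
  by apply: coloured_walk_path walk_v _ vy; rewrite ?prednK.
move=> no_walk; case/negP: not_colourable.
apply: (colourable_recolour (j0 := j0) e_sym e_irr exy c_proper ujs js_gt0).
move=> v walk_v; apply: contraNN no_walk => vy.
by apply/existsP; exists v; rewrite walk_v.
Qed.

Theorem proposition4 (T : finType) (e : rel T) (k : nat) :
  symmetric e -> irreflexive e ->
  ~ complete e -> double_critical e -> chiG e = k ->
  forall x y : T, e x y ->
    (forall c : T -> 'I_(k - 2),
       proper_colouring e ([set: T] :\ x :\ y) c ->
       forall js : seq 'I_(k - 2), uniq js -> 0 < size js ->
       exists p : seq T,
         [/\ size p = size js, uniq (x :: rcons p y), path e x (rcons p y)
           & map c p = js])
    /\
    (forall i : nat, 1 <= i <= k - 2 ->
       (k - 2)`! %/ (k - 2 - i)`! <=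
       #|[set C : {set {set T}} | is_cycle_of_length e (i + 2) C
                                  & [set x; y] \in C]|).
Proof.
move=> e_sym e_irr _ [_ chi_edge] chi_k x y exy.
have paths c : proper_colouring e ([set: T] :\ x :\ y) c ->
    forall js : seq 'I_(k - 2), uniq js -> 0 < size js ->
    exists p : seq T, [/\ size p = size js, uniq (x :: rcons p y),
                        path e x (rcons p y) & map c p = js].
  move=> c_proper js ujs js_gt0; apply: coloured_path_exists => //.
  have k_gt2 : 2 < k by move: js_gt0; case: (js) => // j _ _; have := ltn_ord j; lia.
  by apply/negP => /chi_le_colourable; rewrite -/(chiG e) chi_k; lia.
split=> // i /andP[i_gt0 i_le].
have [c c_proper] : exists c : T -> 'I_(k - 2),
    proper_colouring e ([set: T] :\ x :\ y) c.
  apply: colourable_proper_colouring (colourable_chi e_irr _) _.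
  by rewrite -chi_k chi_edge.
rewrite -ffact_factd //.
by apply: cycles_through_edge_lower_bound i_gt0 _ (paths c c_proper); rewrite e_sym.
Qed.
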